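(* Under the triangle scaling property with constant $G\ge1$, the iterates of acc-BPP3 satisfy, for every $T\ge1$ and every $\lambda\in\Lambda$, $$d(\lambda)-d(\lambda_T)\le\frac{4G\,D_h(\lambda,\lambda_0)}{\big(\sum_{k=0}^{T-1}\sqrt{\eta_k}\big)^2}.$$
   Context: $\Lambda\subseteq\mathbb{R}^m$ closed convex, $d:\Lambda\to\mathbb{R}$ concave. $h$ strictly convex, continuously differentiable on $\Lambda$, $D_h(\lambda,\tilde\lambda)=h(\lambda)-h(\tilde\lambda)-\nabla h(\tilde\lambda)^\top(\lambda-\tilde\lambda)$. Triangle scaling property with constant $G$: $D_h((1-\theta)\lambda+\theta\lambda_1,(1-\theta)\lambda+\theta\lambda_2)\le G\theta^2D_h(\lambda_1,\lambda_2)$ for all $\lambda,\lambda_1,\lambda_2\in\Lambda$, $\theta\in[0,1]$. Algorithm acc-BPP3: given $\lambda_0\in\Lambda$, $v_0=\lambda_0$, $\theta_0=1$, $\eta_k>0$; for $k\ge0$: $y_k=\theta_kv_k+(1-\theta_k)\lambda_k$; $\lambda_{k+1}\in\arg\max_{\lambda\in\Lambda}\{d(\lambda)-\frac1{\eta_k}D_h(\lambda,y_k)\}$; $v_{k+1}\in\arg\max_{\lambda\in\Lambda}\big\{-GD_h(\lambda,\lambda_0)+\sum_{j=0}^k\frac{\eta_j}{\theta_j}\big(d(\lambda_{j+1})+\frac1{\eta_j}(\nabla h(\lambda_{j+1})-\nabla h(y_j))^\top(\lambda-\lambda_{j+1})\big)\big\}$; $\theta_{k+1}\in(0,1]$ is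 defined by $\frac{\eta_k}{\theta_k^2}=\frac{\eta_{k+1}}{\theta_{k+1}^2}-\frac{\eta_{k+1}}{\theta_{k+1}}$. All maximizers are assumed to exist. *)

From Stdlib Require Import Reals Lra.
Open Scope R_scope.

(* Vectors of R^m are represented as functions nat -> R whose support is
   contained in {0,...,m-1} (see [in_Rm]). *)
Definition vec := nat -> R.

Definition in_Rm (m : nat) (x : vec) : Prop := forall i, (m <= i)%nat -> x i = 0.

Definition vadd (x y : vec) : vec := fun i => x i + y i.
Definition vsub (x y : vec) : vec := fun i => x i - y i.
Definition vscale (a : R) (x : vec) : vec := fun i => a * x i.

Fixpoint dot (m : nat) (x y : vec) : R :=
  match m with
  | O => 0
  | S k => dot k x y + x k * y k
  end.

Definition vnorm (m : nat) (x : vec) : R := sqrt (dot m x x).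

Definition subset_Rm (m : nat) (L : vec -> Prop) : Prop :=
  forall x, L x -> in_Rm m x.

Definition closed_in_Rm (m : nat) (L : vec -> Prop) : Prop :=
  forall x, in_Rm m x ->
    (forall eps, 0 < eps -> exists y, L y /\ vnorm m (vsub x y) < eps) -> L x.

Definition convex_in (L : vec -> Prop) : Prop :=
  forall x y t, L x -> L y -> 0 <= t <= 1 ->
    L (vadd (vscale t x) (vscale (1 - t) y)).

Definition concave_on (L : vec -> Prop) (d : vec -> R) : Prop :=
  forall x y t, L x -> L y -> 0 <= t <= 1 ->
    t * d x + (1 - t) * d y <= d (vadd (vscale t x) (vscale (1 - t) y)).

Definition strictly_convex_on (L : vec -> Prop) (h : vec -> R) : Prop :=
  forall x y t, L x -> L y -> x <> y -> 0 < t < 1 ->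
    h (vadd (vscale t x) (vscale (1 - t) y)) < t * h x + (1 - t) * h y.

Definition has_gradient_at (m : nat) (h : vec -> R) (x g : vec) : Prop :=
  forall eps, 0 < eps -> exists delta, 0 < delta /\
    forall z, in_Rm m z -> vnorm m (vsub z x) < delta ->
      Rabs (h z - h x - dot m g (vsub z x)) <= eps * vnorm m (vsub z x).

Definition C1_on (m : nat) (L : vec -> Prop) (h : vec -> R) (gh : vec -> vec) : Prop :=
  (forall x, L x -> in_Rm m (gh x) /\ has_gradient_at m h x (gh x)) /\
  (forall x, L x -> forall eps, 0 < eps -> exists delta, 0 < delta /\
     forall z, L z -> vnorm m (vsub z x) < delta ->
       vnorm m (vsub (gh z) (gh x)) < eps).

Definition Dh (m : nat) (h : vec -> R) (gh : vec -> vec) (x y : vec) : R :=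
  h x - h y - dot m (gh y) (vsub x y).

Definition triangle_scaling (m : nat) (L : vec -> Prop) (h : vec -> R)
    (gh : vec -> vec) (G : R) : Prop :=
  forall l l1 l2 th, L l -> L l1 -> L l2 -> 0 <= th <= 1 ->
    Dh m h gh (vadd (vscale (1 - th) l) (vscale th l1))
              (vadd (vscale (1 - th) l) (vscale th l2))
    <= G * th ^ 2 * Dh m h gh l1 l2.

Definition accBPP3 (m : nat) (L : vec -> Prop) (d h : vec -> R) (gh : vec -> vec)
    (G : R) (eta theta : nat -> R) (lam v y : nat -> vec) : Prop :=
  L (lam O) /\ v O = lam O /\ theta O = 1 /\
  (forall k, 0 < eta k) /\
  (forall k, y k = vadd (vscale (theta k) (v k)) (vscale (1 - theta k) (lam k))) /\
  (forall k, L (lam (S k)) /\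
     forall l, L l ->
       d l - / eta k * Dh m h gh l (y k)
       <= d (lam (S k)) - / eta k * Dh m h gh (lam (S k)) (y k)) /\
  (forall k, L (v (S k)) /\
     let obj := fun l : vec =>
       - G * Dh m h gh l (lam O)
       + sum_f_R0 (fun j => eta j / theta j *
            (d (lam (S j)) + / eta j *
               dot m (vsub (gh (lam (S j))) (gh (y j))) (vsub l (lam (S j))))) k in
     forall l, L l -> obj l <= obj (v (S k))) /\
  (forall k, 0 < theta (S k) <= 1 /\
     eta k / theta k ^ 2 = eta (S k) / theta (S k) ^ 2 - eta (S k) / theta (S k)).

From Stdlib Require Import Reals Lra Psatz Lia Classical FunctionalExtensionality.
Open Scope R_scope.

(* Let ell_k be the linearization of d at lam_(k+1) supplied by the optimality of
   the proximal step (it majorizes d on Lambda), A_k := eta_k / theta_k^2 ([weight]),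
   and P_k := sum_(j<=k) (eta_j / theta_j) ell_j ([lin_sum]), so that v_(k+1) maximizes
   -G D_h(., lam_0) + P_k.  The triangle scaling property bounds the extrapolation
   error of ell_k at (1 - theta_k) lam_k + theta_k v_(k+1), and the three-point
   identity of the mirror step telescopes these errors, giving by induction
   max (-G D_h(., lam_0) + P_k) <= A_k d(lam_(k+1)).  Since P_k >= A_k d (the
   weights eta_j / theta_j sum to A_k), A_k (d(l) - d(lam_(k+1))) <= G D_h(l, lam_0),
   and the step-size recursion gives sqrt A_k >= (1/2) sum_(j<=k) sqrt eta_j. *)

Local Notation segment t x z := (vadd (vscale t x) (vscale (1 - t) z)).

Lemma dot_add_r m a b c : dot m a (vadd b c) = dot m a b + dot m a c.
Proof. induction m; simpl; [ring | rewrite IHm; unfold vadd; ring]. Qed.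

Lemma dot_scale_r m a t b : dot m a (vscale t b) = t * dot m a b.
Proof. induction m; simpl; [ring | rewrite IHm; unfold vscale; ring]. Qed.

Lemma dot_scale_l m t a b : dot m (vscale t a) b = t * dot m a b.
Proof. induction m; simpl; [ring | rewrite IHm; unfold vscale; ring]. Qed.

Lemma dot_sub_r m a b c : dot m a (vsub b c) = dot m a b - dot m a c.
Proof. induction m; simpl; [ring | rewrite IHm; unfold vsub; ring]. Qed.

Lemma dot_sub_l m a b c : dot m (vsub a b) c = dot m a c - dot m b c.
Proof. induction m; simpl; [ring | rewrite IHm; unfold vsub; ring]. Qed.

Lemma vnorm_scale m t a : 0 <= t -> vnorm m (vscale t a) = t * vnorm m a.
Proof.
  intro Ht. unfold vnorm. rewrite dot_scale_l, dot_scale_r, <- Rmult_assoc.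
  rewrite sqrt_mult_alt by nra. rewrite sqrt_square by lra. reflexivity.
Qed.

Lemma vsub_segment t x z : vsub (segment t x z) z = vscale t (vsub x z).
Proof. apply functional_extensionality; intro i; unfold vsub, vadd, vscale; ring. Qed.

Lemma in_Rm_segment m t x z : in_Rm m x -> in_Rm m z -> in_Rm m (segment t x z).
Proof. intros Hx Hz i Hi. unfold vadd, vscale. rewrite (Hx i Hi), (Hz i Hi). ring. Qed.

Lemma dot_sub_segment m g t x z c :
  dot m g (vsub (segment t x z) c) = t * dot m g (vsub x c) + (1 - t) * dot m g (vsub z c).
Proof. rewrite !dot_sub_r, dot_add_r, !dot_scale_r. ring. Qed.

Lemma gradient_difference_quotient m h g x z :
  in_Rm m x -> in_Rm m z -> has_gradient_at m h z g ->
  forall eps, 0 < eps -> exists t, 0 < t < 1 /\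
    Rabs (h (segment t x z) - h z - t * dot m g (vsub x z)) <= t * eps.
Proof.
  intros Hx Hz Hg eps Heps.
  set (N := vnorm m (vsub x z)).
  assert (HN : 0 <= N) by (unfold N, vnorm; apply sqrt_pos).
  destruct (Hg (eps / (N + 1)) ltac:(apply Rdiv_lt_0_compat; lra)) as [del [Hdel Hd]].
  set (t := Rmin (1 / 2) (del / (N + 1))).
  assert (Ht1 : t <= 1 / 2) by apply Rmin_l.
  assert (Ht2 : t <= del / (N + 1)) by apply Rmin_r.
  assert (Ht0 : 0 < t) by (apply Rmin_glb_lt; [lra | apply Rdiv_lt_0_compat; lra]).
  exists t; split; [lra |].
  specialize (Hd (segment t x z) (in_Rm_segment m t x z Hx Hz)).
  rewrite vsub_segment, vnorm_scale, dot_scale_r in Hd by lra. fold N in Hd.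
  assert (Hclose : t * N < del).
  { assert (t * (N + 1) <= del) by (apply (Rmult_le_reg_r (/ (N + 1))); [apply Rinv_0_lt_compat; lra |];
      replace (t * (N + 1) * / (N + 1)) with t by (field; lra); exact Ht2).
    nra. }
  eapply Rle_trans; [apply Hd; exact Hclose |].
  assert (eps / (N + 1) * (t * N) = t * eps * (N / (N + 1))) by (field; lra).
  assert (N / (N + 1) <= 1) by (apply (Rmult_le_reg_r (N + 1)); [lra |];
    replace (N / (N + 1) * (N + 1)) with N by (field; lra); lra).
  assert (t * eps * (N / (N + 1)) <= t * eps * 1)
    by (apply Rmult_le_compat_l; [apply Rlt_le, Rmult_lt_0_compat |]; lra).
  lra.
Qed.

Lemma gradient_lower_bound m h g x z c :
  in_Rm m x -> in_Rm m z -> has_gradient_at m h z g ->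
  (forall t, 0 < t < 1 -> t * c <= h (segment t x z) - h z) ->
  c <= dot m g (vsub x z).
Proof.
  intros Hx Hz Hg Hc.
  destruct (Rle_or_lt c (dot m g (vsub x z))) as [Hle | Hlt]; [exact Hle | exfalso].
  destruct (gradient_difference_quotient m h g x z Hx Hz Hg ((c - dot m g (vsub x z)) / 2)
    ltac:(lra)) as [t [Ht Ha]].
  specialize (Hc t Ht).
  pose proof (Rle_abs (h (segment t x z) - h z - t * dot m g (vsub x z))).
  nra.
Qed.

Lemma gradient_upper_bound m h g x z c :
  in_Rm m x -> in_Rm m z -> has_gradient_at m h z g ->
  (forall t, 0 < t < 1 -> h (segment t x z) - h z <= t * c) ->
  dot m g (vsub x z) <= c.
Proof.
  intros Hx Hz Hg Hc.
  destruct (Rle_or_lt (dot m g (vsub x z)) c) as [Hle | Hlt]; [exact Hle | exfalso].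
  destruct (gradient_difference_quotient m h g x z Hx Hz Hg ((dot m g (vsub x z) - c) / 2)
    ltac:(lra)) as [t [Ht Ha]].
  specialize (Hc t Ht).
  pose proof (Rle_abs (- (h (segment t x z) - h z - t * dot m g (vsub x z)))) as Habs.
  rewrite Rabs_Ropp in Habs.
  nra.
Qed.

Lemma Dh_nonneg m L h gh x z :
  strictly_convex_on L h -> in_Rm m x -> in_Rm m z -> has_gradient_at m h z (gh z) ->
  L x -> L z -> 0 <= Dh m h gh x z.
Proof.
  intros Hc Hx Hz Hg Lx Lz. unfold Dh.
  destruct (classic (x = z)) as [<- | Hne].
  - rewrite dot_sub_r. lra.
  - enough (dot m (gh z) (vsub x z) <= h x - h z) by lra.
    apply (gradient_upper_bound m h (gh z) x z); auto.
    intros t Ht. specialize (Hc x z t Lx Lz Hne Ht). lra.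
Qed.

Lemma Dh_sub_l m h gh x x' z :
  Dh m h gh x z - Dh m h gh x' z = h x - h x' - dot m (gh z) (vsub x x').
Proof. unfold Dh. rewrite !dot_sub_r. ring. Qed.

Lemma Dh_three_point m h gh x z w :
  Dh m h gh x z - Dh m h gh x w - Dh m h gh w z = dot m (vsub (gh w) (gh z)) (vsub x w).
Proof. unfold Dh. rewrite !dot_sub_l, !dot_sub_r. ring. Qed.

Lemma prox_step_linearization m L d h gh eta y l' :
  subset_Rm m L -> convex_in L -> concave_on L d ->
  has_gradient_at m h l' (gh l') -> 0 < eta -> L l' ->
  (forall l, L l -> d l - / eta * Dh m h gh l y <= d l' - / eta * Dh m h gh l' y) ->
  forall l, L l -> d l <= d l' + / eta * dot m (vsub (gh l') (gh y)) (vsub l l').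
Proof.
  intros Hs Hcvx Hcc Hg Heta Ll' Hmax l Hl.
  assert (Hfo : eta * (d l - d l') + dot m (gh y) (vsub l l') <= dot m (gh l') (vsub l l')).
  { apply (gradient_lower_bound m h); auto.
    intros t Ht.
    assert (Lw : L (segment t l l')) by (apply Hcvx; auto; lra).
    pose proof (Hmax _ Lw) as Hprox.
    pose proof (Hcc l l' t Hl Ll' ltac:(lra)) as Hconc.
    pose proof (Dh_sub_l m h gh (segment t l l') l' y) as Hdiff.
    rewrite vsub_segment, dot_scale_r in Hdiff.
    assert (Hscaled : eta * (d (segment t l l') - d l')
                      <= Dh m h gh (segment t l l') y - Dh m h gh l' y).
    { replace (Dh m h gh (segment t l l') y - Dh m h gh l' y)
        with (eta * (/ eta * (Dh m h gh (segment t l l') y - Dh m h gh l' y))) by (field; lra).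
      apply Rmult_le_compat_l; lra. }
    nra. }
  rewrite dot_sub_l.
  replace (d l) with (d l' + / eta * (eta * (d l - d l'))) by (field; lra).
  apply Rplus_le_compat_l, Rmult_le_compat_l; [left; apply Rinv_0_lt_compat |]; lra.
Qed.

Definition segment_affine (P : vec -> R) : Prop :=
  forall t x z, P (segment t x z) = t * P x + (1 - t) * P z.

Lemma segment_affine_sum (f : nat -> vec -> R) k :
  (forall j, segment_affine (f j)) -> segment_affine (fun l => sum_f_R0 (fun j => f j l) k).
Proof.
  intros Hf t x z. induction k as [| k IH]; simpl; rewrite Hf; [ring |]. rewrite IH. ring.
Qed.

Lemma mirror_step_three_point m L h gh G l0 P V :
  subset_Rm m L -> convex_in L -> has_gradient_at m h V (gh V) -> 0 < G -> L V ->
  segment_affine P ->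
  (forall l, L l -> - G * Dh m h gh l l0 + P l <= - G * Dh m h gh V l0 + P V) ->
  forall l, L l -> - G * Dh m h gh l l0 + P l <= - G * Dh m h gh V l0 + P V - G * Dh m h gh l V.
Proof.
  intros Hs Hcvx Hg HG LV HP Hmax l Hl.
  set (c := (P l - P V + G * dot m (gh l0) (vsub l V)) / G).
  assert (Hfo : c <= dot m (gh V) (vsub l V)).
  { apply (gradient_lower_bound m h); auto.
    intros t Ht.
    assert (Lw : L (segment t l V)) by (apply Hcvx; auto; lra).
    pose proof (Hmax _ Lw) as Hw. rewrite HP in Hw.
    pose proof (Dh_sub_l m h gh (segment t l V) V l0) as Hdiff.
    rewrite vsub_segment, dot_scale_r in Hdiff.
    apply (Rmult_le_reg_l G); [lra |].
    replace (G * (t * c)) with (t * (P l - P V + G * dot m (gh l0) (vsub l V)))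
      by (unfold c; field; lra).
    nra. }
  assert (HGc : G * c <= G * dot m (gh V) (vsub l V)) by (apply Rmult_le_compat_l; lra).
  replace (G * c) with (P l - P V + G * dot m (gh l0) (vsub l V)) in HGc
    by (unfold c; field; lra).
  pose proof (Dh_three_point m h gh l l0 V) as Htp. rewrite dot_sub_l in Htp.
  nra.
Qed.

Lemma sqrt_weight_increment eta theta :
  0 < eta -> 0 < theta <= 1 -> 0 <= eta / theta ^ 2 - eta / theta ->
  2 * sqrt (eta / theta ^ 2 - eta / theta) + sqrt eta <= 2 * sqrt (eta / theta ^ 2).
Proof.
  intros Heta Hth Hnn.
  set (e := sqrt eta).
  assert (He : 0 < e) by (apply sqrt_lt_R0; lra).
  assert (Hee : e * e = eta) by (apply sqrt_sqrt; lra).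
  set (b := e / theta).
  assert (Hb : sqrt (eta / theta ^ 2) = b).
  { rewrite <- Hee. replace (e * e / theta ^ 2) with (b * b) by (unfold b; field; lra).
    apply sqrt_square. unfold b. apply Rlt_le, Rdiv_lt_0_compat; lra. }
  assert (HA : eta / theta ^ 2 - eta / theta = b * b - e * b)
    by (rewrite <- Hee; unfold b; field; lra).
  assert (Hbe : e <= b).
  { unfold b. apply (Rmult_le_reg_r theta); [lra |].
    replace (e / theta * theta) with e by (field; lra). nra. }
  rewrite Hb, HA. rewrite HA in Hnn.
  set (a := sqrt (b * b - e * b)).
  assert (Ha : a * a = b * b - e * b) by (apply sqrt_sqrt; lra).
  assert (0 <= a) by apply sqrt_pos.
  assert (a <= b - e / 2) by nra.
  lra.
Qed.

Lemma rate_of_weighted_bound A S x B :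
  0 < S -> S ^ 2 <= 4 * A -> A * x <= B -> 0 <= B -> x <= 4 * B / S ^ 2.
Proof.
  intros HS HSA Hx HB.
  apply (Rmult_le_reg_r (S ^ 2)); [nra |].
  replace (4 * B / S ^ 2 * S ^ 2) with (4 * B) by (field; lra).
  destruct (Rle_or_lt 0 x); nra.
Qed.

Section AccBPP3.

Variables (m : nat) (L : vec -> Prop) (d h : vec -> R) (gh : vec -> vec) (G : R).
Variables (eta theta : nat -> R) (lam v y : nat -> vec).

Hypothesis Hs : subset_Rm m L.
Hypothesis Hcvx : convex_in L.
Hypothesis Hcc : concave_on L d.
Hypothesis Hsc : strictly_convex_on L h.
Hypothesis HC : C1_on m L h gh.
Hypothesis HG : 0 < G.
Hypothesis Htri : triangle_scaling m L h gh G.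
Hypothesis Hacc : accBPP3 m L d h gh G eta theta lam v y.

Let D := Dh m h gh.

Definition ell k l :=
  d (lam (S k)) + / eta k * dot m (vsub (gh (lam (S k))) (gh (y k))) (vsub l (lam (S k))).

Definition weight k := eta k / theta k ^ 2.

Definition lin_sum k l := sum_f_R0 (fun j => eta j / theta j * ell j l) k.

Lemma grad_in l : L l -> has_gradient_at m h l (gh l).
Proof. intro Hl. exact (proj2 (proj1 HC l Hl)). Qed.

Lemma eta_pos k : 0 < eta k.
Proof. apply Hacc. Qed.

Lemma theta_bounds k : 0 < theta k <= 1.
Proof.
  destruct Hacc as (_ & _ & Hth0 & _ & _ & _ & _ & Hth).
  destruct k; [rewrite Hth0; lra | apply Hth].
Qed.

Lemma weight_recursion k : weight k = weight (S k) - eta (S k) / theta (S k).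
Proof. apply Hacc. Qed.

Lemma weight_pos k : 0 < weight k.
Proof.
  pose proof (eta_pos k). pose proof (theta_bounds k).
  unfold weight. apply Rdiv_lt_0_compat; nra.
Qed.

Lemma lam_in k : L (lam k).
Proof.
  destruct Hacc as (HL0 & _ & _ & _ & _ & Hlam & _).
  destruct k; [exact HL0 | apply Hlam].
Qed.

Lemma v_in k : L (v k).
Proof.
  destruct Hacc as (HL0 & Hv0 & _ & _ & _ & _ & Hv & _).
  destruct k; [rewrite Hv0; exact HL0 | apply Hv].
Qed.

Lemma y_segment k : y k = segment (1 - theta k) (lam k) (v k).
Proof.
  destruct Hacc as (_ & _ & _ & _ & Hy & _).
  rewrite Hy. apply functional_extensionality; intro i; unfold vadd, vscale. ring.
Qed.

Lemma y_in k : L (y k).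
Proof.
  rewrite y_segment. pose proof (theta_bounds k).
  apply Hcvx; [apply lam_in | apply v_in | lra].
Qed.

Lemma ell_affine k : segment_affine (ell k).
Proof. intros t x z. unfold ell. rewrite dot_sub_segment. ring. Qed.

Lemma lin_sum_affine k : segment_affine (lin_sum k).
Proof.
  apply (segment_affine_sum (fun j l => eta j / theta j * ell j l)).
  intros j t x z. rewrite ell_affine. ring.
Qed.

Lemma ell_upper k l : L l -> d l <= ell k l.
Proof.
  destruct Hacc as (_ & _ & _ & _ & _ & Hlam & _).
  destruct (Hlam k) as [Ll' Hmax].
  apply (prox_step_linearization m L d h gh (eta k) (y k) (lam (S k))); auto.
  - apply grad_in, Ll'.
  - apply eta_pos.
Qed.

Lemma v_step_optimal k l : L l ->
  - G * D l (lam O) + lin_sum k l <= - G * D (v (S k)) (lam O) + lin_sum k (v (S k)).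
Proof.
  destruct Hacc as (_ & _ & _ & _ & _ & _ & Hv & _).
  apply (proj2 (Hv k)).
Qed.

Lemma v_step_three_point k l : L l ->
  - G * D l (lam O) + lin_sum k l
  <= - G * D (v (S k)) (lam O) + lin_sum k (v (S k)) - G * D l (v (S k)).
Proof.
  apply (mirror_step_three_point m L h gh); auto.
  - apply grad_in, v_in.
  - apply v_in.
  - apply lin_sum_affine.
  - apply v_step_optimal.
Qed.

(* The extrapolated point z_k = (1 - theta_k) lam_k + theta_k v_(k+1) differs from
   y_k = (1 - theta_k) lam_k + theta_k v_k only in the theta_k-scaled direction. *)
Lemma ell_extrapolation k :
  ell k (segment (1 - theta k) (lam k) (v (S k)))
  <= d (lam (S k)) + G * theta k ^ 2 / eta k * D (v (S k)) (v k).
Proof.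
  set (z := segment (1 - theta k) (lam k) (v (S k))).
  pose proof (theta_bounds k) as Hth. pose proof (eta_pos k) as Heta.
  assert (Lz : L z) by (apply Hcvx; [apply lam_in | apply v_in | lra]).
  assert (Hz : z = vadd (vscale (1 - theta k) (lam k)) (vscale (theta k) (v (S k)))).
  { unfold z. apply functional_extensionality; intro i; unfold vadd, vscale. ring. }
  assert (Hyk : y k = vadd (vscale (1 - theta k) (lam k)) (vscale (theta k) (v k))).
  { rewrite y_segment. apply functional_extensionality; intro i; unfold vadd, vscale. ring. }
  pose proof (Htri (lam k) (v (S k)) (v k) (theta k) (lam_in k) (v_in _) (v_in k) ltac:(lra))
    as Hscale.
  rewrite <- Hz, <- Hyk in Hscale.
  pose proof (Dh_three_point m h gh z (y k) (lam (S k))) as Htp.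
  pose proof (Dh_nonneg m L h gh z (lam (S k)) Hsc (Hs _ Lz) (Hs _ (lam_in _))
    (grad_in _ (lam_in _)) Lz (lam_in _)).
  pose proof (Dh_nonneg m L h gh (lam (S k)) (y k) Hsc (Hs _ (lam_in _)) (Hs _ (y_in k))
    (grad_in _ (y_in k)) (lam_in _) (y_in k)).
  unfold ell. fold z. unfold D.
  replace (G * theta k ^ 2 / eta k * Dh m h gh (v (S k)) (v k))
    with (/ eta k * (G * theta k ^ 2 * Dh m h gh (v (S k)) (v k))) by (field; lra).
  apply Rplus_le_compat_l, Rmult_le_compat_l; [left; apply Rinv_0_lt_compat |]; lra.
Qed.

(* One step of the potential argument; [a] is the previous weight A_(k-1), which
   equals weight k * (1 - theta k) by the step-size recursion (and 0 at k = 0). *)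
Lemma potential_step k a :
  0 <= a -> a = weight k * (1 - theta k) ->
  a * d (lam k) - G * D (v (S k)) (v k) + eta k / theta k * ell k (v (S k))
  <= weight k * d (lam (S k)).
Proof.
  intros Ha0 Ha.
  pose proof (theta_bounds k) as Hth. pose proof (eta_pos k) as Heta.
  pose proof (ell_extrapolation k) as Hext.
  rewrite ell_affine in Hext.
  assert (Hlk : a * d (lam k) <= a * ell k (lam k))
    by (apply Rmult_le_compat_l; [lra | apply ell_upper, lam_in]).
  assert (Hw : 0 <= weight k) by (apply Rlt_le, weight_pos).
  apply (Rmult_le_compat_l (weight k)) in Hext; [| exact Hw].
  replace (eta k / theta k) with (weight k * theta k) by (unfold weight; field; lra).
  replace (weight k * (d (lam (S k)) + G * theta k ^ 2 / eta k * D (v (S k)) (v k)))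
    with (weight k * d (lam (S k)) + G * D (v (S k)) (v k)) in Hext
    by (unfold weight; field; lra).
  subst a. nra.
Qed.

Lemma potential_bound k :
  - G * D (v (S k)) (lam O) + lin_sum k (v (S k)) <= weight k * d (lam (S k)).
Proof.
  destruct Hacc as (_ & Hv0 & Hth0 & _).
  induction k as [| k IH].
  - assert (Hstart : 0 = weight 0 * (1 - theta 0)) by (rewrite Hth0; ring).
    pose proof (potential_step 0 0 (Rle_refl 0) Hstart) as Hstep.
    rewrite Hv0 in Hstep. unfold lin_sum; simpl. lra.
  - assert (Hprev : weight k = weight (S k) * (1 - theta (S k))).
    { rewrite weight_recursion. pose proof (theta_bounds (S k)). unfold weight. field. lra. }
    pose proof (potential_step (S k) (weight k) (Rlt_le _ _ (weight_pos k)) Hprev) as Hstep.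
    pose proof (v_step_three_point k (v (S (S k))) (v_in _)) as Htp.
    unfold lin_sum in *; simpl.
    lra.
Qed.

Lemma weight_sum k : sum_f_R0 (fun j => eta j / theta j) k = weight k.
Proof.
  destruct Hacc as (_ & _ & Hth0 & _).
  induction k as [| k IH]; simpl.
  - unfold weight. rewrite Hth0. field.
  - rewrite IH, weight_recursion. ring.
Qed.

Lemma lin_sum_lower k l : L l -> weight k * d l <= lin_sum k l.
Proof.
  intro Hl. rewrite <- weight_sum, Rmult_comm, scal_sum. unfold lin_sum.
  apply sum_Rle. intros j _.
  pose proof (eta_pos j). pose proof (theta_bounds j).
  apply Rmult_le_compat_l.
  - apply Rlt_le, Rdiv_lt_0_compat; lra.
  - apply ell_upper, Hl.
Qed.

Lemma weighted_value_bound k l : L l ->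
  weight k * (d l - d (lam (S k))) <= G * D l (lam O).
Proof.
  intro Hl.
  pose proof (v_step_optimal k l Hl). pose proof (potential_bound k).
  pose proof (lin_sum_lower k l Hl). nra.
Qed.

Lemma sum_sqrt_eta_pos k : 0 < sum_f_R0 (fun j => sqrt (eta j)) k.
Proof.
  induction k as [| k IH]; simpl.
  - apply sqrt_lt_R0, eta_pos.
  - pose proof (sqrt_pos (eta (S k))). lra.
Qed.

Lemma sum_sqrt_eta_le k : sum_f_R0 (fun j => sqrt (eta j)) k <= 2 * sqrt (weight k).
Proof.
  destruct Hacc as (_ & _ & Hth0 & _).
  induction k as [| k IH]; simpl.
  - unfold weight. rewrite Hth0. replace (eta 0%nat / 1 ^ 2) with (eta 0%nat) by field.
    pose proof (sqrt_pos (eta 0%nat)). lra.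
  - pose proof (weight_recursion k) as Hrec. unfold weight in Hrec |- *. unfold weight in IH.
    rewrite Hrec in IH.
    pose proof (sqrt_weight_increment (eta (S k)) (theta (S k)) (eta_pos _) (theta_bounds _)
      ltac:(rewrite <- Hrec; apply Rlt_le, weight_pos)).
    lra.
Qed.

Lemma sum_sqrt_eta_sq_le k : (sum_f_R0 (fun j => sqrt (eta j)) k) ^ 2 <= 4 * weight k.
Proof.
  pose proof (sum_sqrt_eta_le k). pose proof (sum_sqrt_eta_pos k).
  pose proof (sqrt_sqrt (weight k) (Rlt_le _ _ (weight_pos k))).
  pose proof (sqrt_pos (weight k)).
  nra.
Qed.

Lemma Dh_start_nonneg l : L l -> 0 <= D l (lam O).
Proof.
  intro Hl. pose proof (lam_in O) as L0.
  apply (Dh_nonneg m L); auto. apply grad_in, L0.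
Qed.

End AccBPP3.

Theorem mainTheorem10
  (m : nat) (L : vec -> Prop) (d h : vec -> R) (gh : vec -> vec) (G : R)
  (eta theta : nat -> R) (lam v y : nat -> vec) :
  subset_Rm m L -> closed_in_Rm m L -> convex_in L ->
  concave_on L d ->
  strictly_convex_on L h -> C1_on m L h gh ->
  1 <= G -> triangle_scaling m L h gh G ->
  accBPP3 m L d h gh G eta theta lam v y ->
  forall (T : nat), (1 <= T)%nat ->
  forall l, L l ->
    d l - d (lam T)
    <= 4 * G * Dh m h gh l (lam O)
       / (sum_f_R0 (fun k => sqrt (eta k)) (T - 1)) ^ 2.
Proof.
  intros Hs _ Hcvx Hcc Hsc HC HG Htri Hacc T HT l Hl.
  destruct T as [| k]; [lia |]. replace (S k - 1)%nat with k by lia.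
  assert (HG0 : 0 < G) by lra.
  rewrite Rmult_assoc.
  apply (rate_of_weighted_bound (weight eta theta k)).
  - eapply sum_sqrt_eta_pos; eassumption.
  - eapply sum_sqrt_eta_sq_le; eassumption.
  - eapply weighted_value_bound; eassumption.
  - apply Rmult_le_pos; [lra |]. eapply Dh_start_nonneg; eassumption.
Qed.
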